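(* In the setting below, let $i\in\{1,\dots,\overline M\}$ with $\overline S_i=S_a\times\{b\}$ and put $\overline\tau^\varepsilon_i:=\tau^\varepsilon_{ab}$. For every bounded continuous $f:[0,\infty)\to\mathbb R$, $$\lim_{\varepsilon\downarrow0}\Big(\mathbb E f\Big(\frac{\overline T^\varepsilon(\bar x_1,\overline S_{j_1})}{\overline\tau^\varepsilon_i}\Big)-\mathbb E f\Big(\frac{\overline T^\varepsilon(\bar x_2,\overline S_{j_2})}{\overline\tau^\varepsilon_i}\Big)\Big)=0$$ uniformly in $\bar x_1,\bar x_2\in\overline S_i$ and $j_1,j_2\in\{1,\dots,\overline M\}$ with $\overline P^\varepsilon_{ij_1},\overline P^\varepsilon_{ij_2}>0$.
   Context: $S$ is a metric space partitioned into disjoint Borel sets $S_1,\dots,S_M$; for $\varepsilon>0$, $Q^\varepsilon$ is a Markov kernel from $S$ to $S\times[0,\infty)$, $P^\varepsilon(x,B)=Q^\varepsilon(x,B\times[0,\infty))$, and for $P^\varepsilon(x,B)>0$, $T^\varepsilon(x,B)$ has law $\mathbb P(T^\varepsilon(x,B)\le t)=Q^\varepsilon(x,B\times[0,t])/P^\varepsilon(x,B)$. Assumptions: $P^\varepsilon(x,S_i)=0$ for $x\in S_i$; for $i\ne j$, either $P^\varepsilon(x,S_j)=0$ for all $x\in S_i,\varepsilon$ (set $P^\varepsilon_{ij}\equiv0$) or it is positive for all $x\in S_i,\varepsilon$ and there are positive $P^\varepsilon_{ij}$ with $P^\varepsilon(x,S_j)/P^\varepsilon_{ij}\to1$ uniformly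 in $x\in S_i$; for $P^\varepsilon_{ij}\not\equiv0$ there are positive $\tau^\varepsilon_{ij}$ with $\mathbb ET^\varepsilon(x,S_j)/\tau^\varepsilon_{ij}\to1$ uniformly in $x\in S_i$; for every bounded continuous $f$ and $P^\varepsilon_{ij}\not\equiv0$, $\mathbb E f(T^\varepsilon(x_1,S_j)/\tau^\varepsilon_{ij})-\mathbb E f(T^\varepsilon(x_2,S_j)/\tau^\varepsilon_{ij})\to0$ uniformly in $x_1,x_2\in S_i$. Extended process: $\overline S=\{(x,j):x\in S_i,\ P^\varepsilon_{ij}\not\equiv0\}$ with kernel $\overline Q^\varepsilon((x,j),(A\times\{k\})\times I)=\frac{1}{P^\varepsilon(x,S_j)}\int_{A\cap S_j}P^\varepsilon(y,S_k)Q^\varepsilon(x,dy\times I)$; $\overline S$ is partitioned into sets $S_a\times\{b\}$ with $P^\varepsilon_{ab}\not\equiv0$, re-indexed $\overline S_1,\dots,\overline S_{\overline M}$; $\overline P^\varepsilon(\bar x,B)=\overline Q^\varepsilon(\bar x,B\times[0,\infty))$; $\overline T^\varepsilon(\bar x,B)$ has law $\overline Q^\varepsilon(\bar x,B\times\cdot)/\overline P^\varepsilon(\bar x,B)$. If $\overline S_i=S_a\times\{b\}$, $\overline S_j=S_c\times\{d\}$, then $\overline P^\varepsilon_{ij}=P^\varepsilon_{cd}$ if $b=c$ and $\equiv0$ otherwise. *)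

From HB Require Import structures.
From mathcomp Require Import all_boot all_order all_algebra.
From mathcomp Require Import all_classical all_reals all_analysis.
Set Implicit Arguments. Unset Strict Implicit. Unset Printing Implicit Defensive.
Import Order.TTheory GRing.Theory Num.Theory.
Import numFieldNormedType.Exports.
Local Open Scope classical_set_scope.
Local Open Scope ring_scope.

Notation borel T := (g_sigma_algebraType (@open T)).

Definition Rnn {R : realType} : set R := [set t : R | 0 <= t].

Section Defs.
Context {R : realType} {d : measure_display} {X : measurableType d}.

(* Q : a kernel from X to X * R (the time component lives in [0,oo)). *)
Variable Q : X -> {measure set (X * R)%type -> \bar R}.

Definition Pk (x : X) (B : set X) : R := fine (Q x (B `*` Rnn)).

(* E g(T(x,B)), where T(x,B) has law Q(x, B x .)/P(x,B) on [0,oo):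
   E g(T(x,B)) = (1/P(x,B)) \int_{B x [0,oo)} g(t) Q(x, d(y,t)). *)
Definition ET (x : X) (B : set X) (g : R -> R) : R :=
  fine (\int[Q x]_(z in B `*` Rnn) (g z.2)%:E) / Pk x B.

Definition EmeanT (x : X) (B : set X) : \bar R :=
  ((Pk x B)^-1)%:E * \int[Q x]_(z in B `*` Rnn) (z.2)%:E.

(* For the extended state (x,b) (x in S_b's predecessor
   class, current "target" b) and the target set  A x {k}  with time set I:
   Qbar((x,b),(A x {k}) x I)
     = (1/P(x,S_b)) \int_{(A /\ S_b) x I} P(y,S_k) Q(x, d(y,t)). *)
Definition Qbar (x : X) (Sb : set X) (A : set X) (Sk : set X) (I : set R) : R :=
  (Pk x Sb)^-1 * fine (\int[Q x]_(z in (A `&` Sb) `*` I) (Pk z.1 Sk)%:E).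

Definition Pbar (x : X) (Sb A Sk : set X) : R :=
  Qbar x Sb A Sk Rnn.

(* E g(Tbar((x,b), A x {k})) where Tbar has law Qbar((x,b),(A x {k}) x .) /
   Pbar((x,b), A x {k}); i.e. the integral of g against the measure
   I |-> Qbar(...I...), which has density y |-> P(y,S_k)/P(x,S_b)
   with respect to Q(x,.) restricted to (A /\ S_b) x [0,oo). *)
Definition ETbar (x : X) (Sb A Sk : set X) (g : R -> R) : R :=
  (Pk x Sb)^-1 *
  fine (\int[Q x]_(z in (A `&` Sb) `*` Rnn)
          (Pk z.1 Sk * g z.2)%:E) / Pbar x Sb A Sk.

End Defs.

Definition unif_cvg0 {R : realType} {U : Type} (D : set U)
  (F : R -> U -> R) (l : R) : Prop :=
  forall delta : R, 0 < delta -> exists eps0 : R, 0 < eps0 /\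
    forall eps : R, 0 < eps -> eps < eps0 ->
      forall u, D u -> `|F eps u - l| < delta.

(* E T(x,B)/tau -> 1 uniformly in x in D as eps -> 0+ (in extended reals,
   so that E T = +oo is excluded eventually) *)
Definition unif_cvg0_mean {R : realType} {U : Type} (D : set U)
  (F : R -> U -> \bar R) (tau : R -> R) : Prop :=
  forall delta : R, 0 < delta -> exists eps0 : R, 0 < eps0 /\
    forall eps : R, 0 < eps -> eps < eps0 ->
      forall u, D u -> (`|F eps u * ((tau eps)^-1)%:E - 1| < delta%:E)%E.

Definition Pnz {R : realType} {M : nat} (Pij : R -> 'I_M -> 'I_M -> R)
  (i j : 'I_M) : Prop := ~ (forall eps : R, 0 < eps -> Pij eps i j = 0).

(* Pbar^eps_{ij} for Sbar_i = S_a x {b}, Sbar_j = S_c x {d} *)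
Definition Pbarij {R : realType} {M : nat} (Pij : R -> 'I_M -> 'I_M -> R)
  (eps : R) (i j : 'I_M * 'I_M) : R :=
  if i.2 == j.1 then Pij eps j.1 j.2 else 0.

Definition bdd_cont_nonneg {R : realType} (f : R -> R) : Prop :=
  {within Rnn, continuous f} /\ exists C : R, forall t, Rnn t -> `|f t| <= C.

From HB Require Import structures.
From mathcomp Require Import all_boot all_order all_algebra.
From mathcomp Require Import all_classical all_reals all_analysis.
From mathcomp Require Import ring lra measurable_realfun.
Import Order.TTheory GRing.Theory Num.Theory.
Import numFieldNormedType.Exports.
Local Open Scope classical_set_scope.
Local Open Scope ring_scope.

(* Conditioning the extended process on its next target S_d reweights the law
   of the holding time T(x, S_b) by the density y |-> P(y, S_d) / P(x, S_b).
   As P(y, S_d) / P_bd -> 1 uniformly on S_b, this density is asymptotically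
   constant, so the conditioned expectation of f(T / tau_ab) is asymptotically
   the unconditioned one, uniformly in x and in the target.  The uniform weak
   convergence assumed for T(., S_b) on S_a and the triangle inequality then
   conclude. *)

Lemma ratio_perturbation (R : realFieldType) (u v w m e C : R) :
  0 < m -> 0 <= e <= 1/2 ->
  `|u - w| <= e * C * m -> `|v - m| <= e * m -> `|w| <= C * m ->
  `|u / v - w / m| <= 4 * e * C.
Proof.
move=> m0 /andP[e0 e12] uw vm wm.
have C0 : 0 <= C by rewrite -(pmulr_lge0 _ m0) (le_trans _ wm).
have v_ge : m / 2 <= v.
  by move: vm; rewrite ler_norml => /andP[+ _]; nra.
have v0 : 0 < v by lra.
have -> : u / v - w / m = ((u - w) * m - w * (v - m)) / (v * m).
  by field; rewrite gt_eqF ?gt_eqF.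
rewrite normrM normfV [`|v * m|]gtr0_norm ?mulr_gt0 // ler_pdivrMr ?mulr_gt0 //.
rewrite (le_trans (ler_normB _ _)) // !normrM (gtr0_norm m0).
have eC0 : 0 <= e * C by rewrite mulr_ge0.
have : `|u - w| * m + `|w| * `|v - m| <= e * C * m * m + C * m * (e * m).
  by rewrite lerD // ?ler_pM2r // ler_pM.
have : 0 <= e * C * m * (4 * v - 2 * m).
  by rewrite !mulr_ge0 ?(ltW m0) // subr_ge0; lra.
by nra.
Qed.

Lemma dist_lt_of_close {R : numDomainType} {x1 x2 y1 y2 r s : R} :
  `|x1 - y1| <= r -> `|x2 - y2| <= r -> `|y1 - y2| < s -> `|x1 - x2| < r + s + r.
Proof.
move=> xy1 xy2 y12.
rewrite (le_lt_trans (ler_distD y1 _ _)) // -addrA ler_ltD //.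
by rewrite (le_lt_trans (ler_distD y2 _ _)) // [`|y2 - x2|]distrC ltr_leD.
Qed.

Lemma small_tolerance {R : realFieldType} {C delta : R} : 0 <= C -> 0 < delta ->
  exists eta : R, [/\ 0 < eta, eta <= 1/2 & 12 * eta * C <= delta].
Proof.
move=> C0 delta0; have C1 : 0 < 12 * (C + 1) by lra.
exists (Num.min (1/2) (delta / (12 * (C + 1)))); set eta := Num.min _ _.
have eta_le : eta <= delta / (12 * (C + 1)) by rewrite ge_min lexx orbT.
have eta0 : 0 < eta by rewrite lt_min; apply/andP; split; [lra | exact: divr_gt0].
split => //; first by rewrite ge_min lexx.
by move: eta_le; rewrite ler_pdivlMr //; nra.
Qed.

Lemma near0_forall_fin (R : realDomainType) (I : finType) (P : I -> R -> Prop) :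
  (forall i, exists e : R, 0 < e /\ forall eps, 0 < eps -> eps < e -> P i eps) ->
  exists e : R, 0 < e /\ forall eps, 0 < eps -> eps < e -> forall i, P i eps.
Proof.
move=> near_P.
suff [e [e0 Pe]] : exists e : R, 0 < e /\
    forall eps, 0 < eps -> eps < e -> forall i, i \in enum I -> P i eps.
  by exists e; split => // eps eps0 epse i; apply: Pe; rewrite ?mem_enum.
elim: (enum I) => [|i0 s [e [e0 Pe]]].
  by exists 1; split => // eps _ _ i; rewrite in_nil.
have [e' [e'0 Pe']] := near_P i0.
exists (Num.min e e'); split; first by rewrite lt_min e0 e'0.
move=> eps eps0; rewrite lt_min => /andP[epse epse'] i.
by rewrite in_cons => /predU1P[->|]; [exact: Pe' | exact: Pe].
Qed.

Lemma unif_cvg0_on_support {R : realType} {I : finType} {U : Type} {D : set U}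
    {p : R -> I -> R} {F : R -> I -> U -> R} {l : R} :
  (forall i, (forall eps, 0 < eps -> p eps i = 0) \/ unif_cvg0 D (F^~ i) l) ->
  forall eta, 0 < eta -> exists e : R, 0 < e /\ forall eps, 0 < eps -> eps < e ->
    forall i, 0 < p eps i -> forall u, D u -> `|F eps i u - l| < eta.
Proof.
move=> p0_or_cvg eta eta0; apply: near0_forall_fin => i.
case: (p0_or_cvg i) => [p0 | /(_ eta eta0)[e [e0 Fe]]].
  by exists 1; split => // eps eps0 _; rewrite p0 // ltxx.
by exists e; split => // eps eps0 epse _; exact: Fe.
Qed.

Section bounded_integrands.
Context {d : measure_display} {T : measurableType d} {R : realType}.
Context {mu : {measure set T -> \bar R}} {A : set T}.
Hypotheses (mA : measurable A) (muA : (mu A < +oo)%E).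

Lemma bounded_integrable {g : T -> R} {C : R} : measurable_fun A g ->
  (forall z, A z -> `|g z| <= C) -> mu.-integrable A (EFin \o g).
Proof.
move=> mg gC; apply: measurable_bounded_integrable => //.
exists C; split; first exact: num_real.
by move=> c Cc z Az; apply: le_trans (gC z Az) _; rewrite ltW.
Qed.

Lemma normr_Rintegral_le {g : T -> R} {C : R} : measurable_fun A g ->
  (forall z, A z -> `|g z| <= C) -> `|\int[mu]_(z in A) g z| <= C * fine (mu A).
Proof.
move=> mg gC; have ig := bounded_integrable mg gC.
rewrite (le_trans (le_normr_Rintegral _ _)) // -Rintegral_cst //.
apply: le_Rintegral => //; first exact: integrable_norm.
exact: (bounded_integrable (C := `|C|)).
Qed.

Lemma weighted_mean_near_mean {h g : T -> R} {p C e : R} :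
  0 < fine (mu A) -> 0 < p -> 0 <= e <= 1/2 ->
  measurable_fun A h -> measurable_fun A g ->
  (forall z, A z -> `|g z| <= C) -> (forall z, A z -> `|h z - p| <= e * p) ->
  `|(\int[mu]_(z in A) (h z * g z)) / (\int[mu]_(z in A) h z)
    - (\int[mu]_(z in A) g z) / fine (mu A)| <= 4 * e * C.
Proof.
move=> m0 p0 e01 mh mg gC hp.
have hb z : A z -> `|h z| <= p + e * p.
  move=> Az; rewrite -[h z](subrK p) (le_trans (ler_normD _ _)) //.
  by rewrite (gtr0_norm p0) addrC lerD2l hp.
have mhg : measurable_fun A (fun z => h z * g z) by exact: measurable_funM.
have mhp : measurable_fun A (fun z => h z - p) by exact: measurable_funB.
have ih := bounded_integrable mh hb.
have ig := bounded_integrable mg gC.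
have ihg : mu.-integrable A (EFin \o (fun z => h z * g z)).
  apply: (bounded_integrable (C := (p + e * p) * C)) => // z Az.
  by rewrite normrM; apply: ler_pM => //; [exact: hb | exact: gC].
have -> : (\int[mu]_(z in A) g z) / fine (mu A)
    = (p * \int[mu]_(z in A) g z) / (p * fine (mu A)).
  by rewrite invfM mulrACA mulfV ?gt_eqF // mul1r.
apply: ratio_perturbation => //; first exact: mulr_gt0.
- rewrite -RintegralZl // -RintegralB //; last exact: (integrableZl mA p ig).
  have -> : e * C * (p * fine (mu A)) = e * p * C * fine (mu A) by ring.
  apply: normr_Rintegral_le => [|z Az].
    by apply: measurable_funB => //; exact: measurable_funM.
  by rewrite -mulrBl normrM; apply: ler_pM => //; [exact: hp | exact: gC].
- have -> : e * (p * fine (mu A)) = e * p * fine (mu A) by ring.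
  rewrite -Rintegral_cst // -RintegralB //; last exact: (bounded_integrable (C := `|p|)).
  exact: normr_Rintegral_le.
- have -> : C * (p * fine (mu A)) = p * C * fine (mu A) by ring.
  rewrite -RintegralZl //.
  apply: normr_Rintegral_le => [|z Az]; first exact: measurable_funM.
  by rewrite normrM (gtr0_norm p0) ler_pM2l ?gC.
Qed.

End bounded_integrands.

Lemma measurable_Rnn {R : realType} : measurable (@Rnn R).
Proof.
have -> : @Rnn R = `[0, +oo[%classic.
  by apply/seteqP; split => t; rewrite /Rnn /= in_itv /= andbT.
exact: measurable_itv.
Qed.

Lemma measurable_fun_rescale (R : realType) (f : R -> R) (tau : R) :
  {within Rnn, continuous f} -> 0 < tau ->
  measurable_fun Rnn (fun t => f (t / tau)).
Proof.
move=> cf tau0.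
apply: (measurable_comp (F := Rnn) (f := f)) (mulrr_measurable _) => //.
- exact: measurable_Rnn.
- by move=> _ [t t0 <-]; rewrite /Rnn /= divr_ge0 // ltW.
- by apply: subspace_continuous_measurable_fun => //; exact: measurable_Rnn.
Qed.

Section extended_process.
Context {d : measure_display} {X : measurableType d} {R : realType}.
Variable k : R.-fker X ~> (X * R)%type.

Lemma measurable_Pk (B : set X) :
  measurable B -> measurable_fun setT (fun y => Pk k y B).
Proof.
move=> mB; apply: (measurableT_comp (f := fine)); first exact: fine_measurable.
apply: measurable_kernel; exact: measurableX mB measurable_Rnn.
Qed.

Lemma ETbar_near_ET {Sb Sd : set X} {x : X} {g : R -> R} {p C e : R} :
  measurable Sb -> measurable Sd -> 0 < Pk k x Sb -> 0 < p -> 0 <= e <= 1/2 ->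
  measurable_fun Rnn g -> (forall t, Rnn t -> `|g t| <= C) ->
  (forall y, Sb y -> `|Pk k y Sd / p - 1| <= e) ->
  `|ETbar k x Sb Sb Sd g - ET k x Sb g| <= 4 * e * C.
Proof.
move=> mSb mSd Pb0 p0 e01 mg gC Pdp.
have mA : measurable (Sb `*` @Rnn R) := measurableX mSb measurable_Rnn.
have muA : (k x (Sb `*` Rnn) < +oo)%E.
  have [r kr] := measure_uub k.
  by rewrite (le_lt_trans (le_measure _ _ _ (subsetT _))) ?inE // (lt_trans (kr x)) ?ltry.
(* the normalising factors 1 / P(x, S_b) of Qbar cancel *)
rewrite /ETbar /Pbar /Qbar /ET setIid invfM mulrACA mulfV ?invr_eq0 ?gt_eqF // mul1r.
apply: (weighted_mean_near_mean mA muA (p := p)) => //.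
- apply: measurable_funTS; apply: (measurableT_comp (f := fun y => Pk k y Sd)) => //.
  exact: measurable_Pk.
- apply: (measurable_comp (F := Rnn) (f := g)) => //.
  + exact: measurable_Rnn.
  + by move=> _ [z [_ z2] <-].
  + exact: measurable_funTS measurable_snd.
- by move=> z [_ z2]; exact: gC.
- move=> z [z1 _].
  have -> : Pk k z.1 Sd - p = (Pk k z.1 Sd / p - 1) * p.
    by rewrite mulrBl divfK ?gt_eqF // mul1r.
  by rewrite normrM (gtr0_norm p0) ler_pM2r // Pdp.
Qed.

End extended_process.

Section transition_dichotomy.
Context {R : realType} {M : nat} {X : Type}.
Context {Sp : 'I_M -> set X} {P : R -> X -> set X -> R} {Pij : R -> 'I_M -> 'I_M -> R}.
Hypothesis Pii0 : forall eps i, Pij eps i i = 0.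
Hypothesis dichotomy : forall i j, i != j ->
  (forall eps, 0 < eps -> Pij eps i j = 0 /\ forall x, Sp i x -> P eps x (Sp j) = 0)
  \/ ((forall eps, 0 < eps -> 0 < Pij eps i j /\ forall x, Sp i x -> 0 < P eps x (Sp j))
      /\ unif_cvg0 (Sp i) (fun eps x => P eps x (Sp j) / Pij eps i j) 1).

Lemma P_gt0_of_Pnz {i j} : Pnz Pij i j ->
  forall eps x, 0 < eps -> Sp i x -> 0 < P eps x (Sp j).
Proof.
move=> Pij_nz eps x eps0; have ij : i != j.
  by apply/eqP => eij; apply: Pij_nz => e _; rewrite eij Pii0.
case: (dichotomy _ _ ij) => [P0 | [Ppos _]]; last exact: (Ppos eps eps0).2.
by exfalso; apply: Pij_nz => e e0; case: (P0 e e0).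
Qed.

Lemma Pij_eq0_or_ratio_cvg i j : (forall eps, 0 < eps -> Pij eps i j = 0) \/
  unif_cvg0 (Sp i) (fun eps x => P eps x (Sp j) / Pij eps i j) 1.
Proof.
have [<- | ij] := eqVneq i j; first by left => eps _; exact: Pii0.
case: (dichotomy _ _ ij) => [P0 | [_ cvg]]; last by right.
by left => eps e0; case: (P0 eps e0).
Qed.

End transition_dichotomy.

Lemma Pbarij_gt0 (R : realType) (M : nat) (Pij : R -> 'I_M -> 'I_M -> R) (eps : R)
    (a b c d : 'I_M) :
  0 < Pbarij Pij eps (a, b) (c, d) -> c = b /\ 0 < Pij eps b d.
Proof. by rewrite /Pbarij /=; case: eqP => [-> | _]; rewrite ?ltxx. Qed.

Theorem corollary4p3
  (R : realType) (S : pseudoPMetricType R) (hS : hausdorff_space S)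
  (M : nat) (Sp : 'I_M -> set (borel S))
  (hSm : forall i, measurable (Sp i))
  (hcover : forall x, exists i, Sp i x)
  (hdisj : forall i j x, Sp i x -> Sp j x -> i = j)
  (Q : R -> R.-pker (borel S) ~> (borel S * R)%type)
  (hQsupp : forall eps x, 0 < eps -> Q eps x (setT `*` [set t | t < 0]) = 0%E)
  (Pij tau : R -> 'I_M -> 'I_M -> R)
  (hdiag : forall eps i x, 0 < eps -> Sp i x -> Pk (Q eps) x (Sp i) = 0)
  (hPii : forall eps i, Pij eps i i = 0)
  (hdich : forall i j, i != j ->
     (forall eps, 0 < eps ->
        Pij eps i j = 0 /\ forall x, Sp i x -> Pk (Q eps) x (Sp j) = 0)
     \/ ((forall eps, 0 < eps ->
           0 < Pij eps i j /\ forall x, Sp i x -> 0 < Pk (Q eps) x (Sp j))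
         /\ unif_cvg0 (Sp i)
              (fun eps x => Pk (Q eps) x (Sp j) / Pij eps i j) 1))
  (htau : forall i j, Pnz Pij i j ->
     (forall eps, 0 < eps -> 0 < tau eps i j)
     /\ unif_cvg0_mean (Sp i) (fun eps x => EmeanT (Q eps) x (Sp j))
          (fun eps => tau eps i j))
  (hweak : forall i j, Pnz Pij i j -> forall f : R -> R, bdd_cont_nonneg f ->
     unif_cvg0 (Sp i `*` Sp i)
       (fun eps u => ET (Q eps) u.1 (Sp j) (fun t => f (t / tau eps i j))
                   - ET (Q eps) u.2 (Sp j) (fun t => f (t / tau eps i j))) 0) :
  forall a b : 'I_M, Pnz Pij a b ->
  forall f : R -> R, bdd_cont_nonneg f ->
  forall delta : R, 0 < delta -> exists eps0 : R, 0 < eps0 /\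
    forall eps : R, 0 < eps -> eps < eps0 ->
    forall x1 x2 : borel S, Sp a x1 -> Sp a x2 ->
    forall c1 d1 c2 d2 : 'I_M, Pnz Pij c1 d1 -> Pnz Pij c2 d2 ->
      0 < Pbarij Pij eps (a, b) (c1, d1) ->
      0 < Pbarij Pij eps (a, b) (c2, d2) ->
      `| ETbar (Q eps) x1 (Sp b) (Sp c1) (Sp d1) (fun t => f (t / tau eps a b))
       - ETbar (Q eps) x2 (Sp b) (Sp c2) (Sp d2) (fun t => f (t / tau eps a b)) |
        < delta.
Proof.
move=> a b Pab f [cf [C fC]] delta delta0.
have Pk_ab_gt0 := P_gt0_of_Pnz (P := fun eps => Pk (Q eps)) hPii hdich Pab.
have C0 : 0 <= C := le_trans (normr_ge0 _) (fC 0 (lexx 0)).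
have [eta [eta0 eta12 etaC]] := small_tolerance C0 delta0.
have [e1 [e10 ET_close]] := hweak a b Pab f (conj cf (ex_intro _ C fC)) (delta / 3)
  ltac:(by rewrite divr_gt0).
have [e2 [e20 ratio_close]] := unif_cvg0_on_support
  (F := fun eps dd y => Pk (Q eps) y (Sp dd) / Pij eps b dd)
  (Pij_eq0_or_ratio_cvg (P := fun eps => Pk (Q eps)) hPii hdich b) eta eta0.
exists (Num.min e1 e2); split; first by rewrite lt_min e10 e20.
move=> eps eps0; rewrite lt_min => /andP[eps1 eps2] x1 x2 ax1 ax2 c1 d1 c2 d2 _ _ P1 P2.
have tau0 := (htau a b Pab).1 eps eps0.
have near_ET x c dd : Sp a x -> 0 < Pbarij Pij eps (a, b) (c, dd) ->
    `|ETbar (Q eps) x (Sp b) (Sp c) (Sp dd) (fun t => f (t / tau eps a b))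
      - ET (Q eps) x (Sp b) (fun t => f (t / tau eps a b))| <= 4 * eta * C.
  move=> ax /Pbarij_gt0[-> Pbd].
  apply: (ETbar_near_ET (Q eps) (p := Pij eps b dd)) => //; first exact: Pk_ab_gt0.
  - by rewrite (ltW eta0).
  - exact: measurable_fun_rescale.
  - by move=> t t0; apply: fC; rewrite /Rnn /= divr_ge0 // ltW.
  - by move=> y by_; apply/ltW/(ratio_close eps eps0 eps2).
have := ET_close eps eps0 eps1 (x1, x2) (conj ax1 ax2); rewrite subr0.
move/(dist_lt_of_close (near_ET _ _ _ ax1 P1) (near_ET _ _ _ ax2 P2)); lra.
Qed.
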